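(* Suppose $X$ is a polyhedron and $\Lambda\subsetneq\Lambda_X^\star(\mathcal{A})$ is a proper subset. Then there exists $\tilde y\in\mathbb{R}^{\mathcal{A}}$ such that $\phi_{\lambda'}(\tilde y)\ge0$ for all $\lambda'\in\Lambda$, and $\phi_\lambda(\tilde y)<0$ for some $\lambda\in\Lambda_X^\star(\mathcal{A})\setminus\Lambda$.
   Context: $X\subset\mathbb{R}^n$ is a nonempty closed convex set and $\mathcal{A}\subset\mathbb{R}^n$ is a nonempty finite set such that the functions $x\mapsto\exp(\alpha^Tx)$, $\alpha\in\mathcal{A}$, are linearly independent on $X$. $\mathbb{R}^{\mathcal{A}}$ denotes real vectors indexed by $\mathcal{A}$. $\mathcal{A}\nu=\sum_\alpha\alpha\nu_\alpha$. $\sigma_X(y)=\sup\{y^Tx:x\in X\}$. $N_\beta=\{\nu\in\mathbb{R}^{\mathcal{A}}:\nu_\alpha\ge0\ \forall\alpha\neq\beta,\ \sum_\alpha\nu_\alpha=0\}$. A vector $\nu^\star\in N_\beta$ is an $X$-circuit of $\mathcal{A}$ if (1) $\nu^\star\neq0$, (2) $\sigma_X(-\mathcal{A}\nu^\star)<\infty$, and (3) $\nu^\star$ cannot be written as a convex combination of two non-proportional vectors $\nu^{(1)},\nu^{(2)}\in N_\beta$ such that the map $\nu\mapsto\sigma_X(-\mathcal{A}\nu)$ is affine on the segment $[\nu^{(1)},\nu^{(2)}]$. $\Lambda_X(\mathcal{A})$ is the set of all $X$-circuits $\lambda$ (over all $\beta\in\mathcal{A}$) normalized so that the unique negative entry equals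 $-1$. The functional form of $\lambda\in\Lambda_X(\mathcal{A})$ is the affine function $\phi_\lambda(y)=\sum_\alpha y_\alpha\lambda_\alpha+\sigma_X(-\mathcal{A}\lambda)$ on $\mathbb{R}^{\mathcal{A}}$, also identified with the vector $(\lambda,\sigma_X(-\mathcal{A}\lambda))\in\mathbb{R}^{\mathcal{A}}\times\mathbb{R}$. The circuit graph is $G_X(\mathcal{A})=\operatorname{cone}(\{\phi_\lambda:\lambda\in\Lambda_X(\mathcal{A})\}\cup\{(0,1)\})$. The set of normalized reduced $X$-circuits $\Lambda_X^\star(\mathcal{A})$ consists of those $\lambda\in\Lambda_X(\mathcal{A})$ for which $\{t\phi_\lambda:t\ge0\}$ is an extreme ray of $G_X(\mathcal{A})$. *)

From HB Require Import structures.
From mathcomp Require Import all_boot all_order all_algebra.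
From mathcomp Require Import boolp classical_sets reals ereal sequences exp.
Set Implicit Arguments. Unset Strict Implicit. Unset Printing Implicit Defensive.
Import Order.TTheory GRing.Theory Num.Theory.
Local Open Scope ring_scope.
Local Open Scope classical_set_scope.

Section XCircuits.
Variables (R : realType) (n : nat).

Definition dotp (y x : 'rV[R]_n) : R := \sum_(k < n) y 0 k * x 0 k.

Definition sigmaX (X : set 'rV[R]_n) (y : 'rV[R]_n) : \bar R :=
  ereal_sup [set (dotp y x)%:E | x in X].

Definition polyhedron (X : set 'rV[R]_n) : Prop :=
  exists (m : nat) (a : 'I_m -> 'rV[R]_n) (b : 'I_m -> R),
    X = [set x | forall k, dotp (a k) x <= b k].

Variables (I : finType) (alpha : I -> 'rV[R]_n).
(* The finite set A = {alpha i : i in I}; R^A = functions I -> R. *)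

Definition exp_lin_indep (X : set 'rV[R]_n) : Prop :=
  forall c : I -> R,
    (forall x, X x -> \sum_i c i * expR (dotp (alpha i) x) = 0) ->
    forall i, c i = 0.

Definition Amul (nu : I -> R) : 'rV[R]_n := \sum_i nu i *: alpha i.

Definition Nbeta (beta : I) : set (I -> R) :=
  [set nu | (forall i, i != beta -> 0 <= nu i) /\ \sum_i nu i = 0].

Definition sigmaA (X : set 'rV[R]_n) (nu : I -> R) : \bar R :=
  sigmaX X (- Amul nu).

Definition proportional (u v : I -> R) : Prop :=
  exists c : R, (forall i, u i = c * v i) \/ (forall i, v i = c * u i).

Definition affine_on_segment (X : set 'rV[R]_n) (nu1 nu2 : I -> R) : Prop :=
  sigmaA X nu1 \is a fin_num /\ sigmaA X nu2 \is a fin_num /\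
  forall s : R, 0 <= s <= 1 ->
    sigmaA X (fun i => s * nu1 i + (1 - s) * nu2 i) =
    (s%:E * sigmaA X nu1 + (1 - s)%:E * sigmaA X nu2)%E.

Definition X_circuit (X : set 'rV[R]_n) (beta : I) (nu : I -> R) : Prop :=
  Nbeta beta nu /\
  (exists i, nu i != 0) /\
  (sigmaA X nu < +oo)%E /\
  ~ (exists (nu1 nu2 : I -> R) (t : R),
        [/\ Nbeta beta nu1 /\ Nbeta beta nu2, ~ proportional nu1 nu2,
            0 < t < 1,
            (forall i, nu i = t * nu1 i + (1 - t) * nu2 i) &
            affine_on_segment X nu1 nu2]).

Definition LambdaX (X : set 'rV[R]_n) : set (I -> R) :=
  [set lam | exists beta, X_circuit X beta lam /\ lam beta = -1].

(* functional form (lambda, sigma_X(-A lambda)) in R^A x R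
   (sigma_X(-A lambda) is finite for X-circuits) *)
Definition phivec (X : set 'rV[R]_n) (lam : I -> R) : (I -> R) * R :=
  (lam, fine (sigmaA X lam)).

Definition phi (X : set 'rV[R]_n) (lam : I -> R) (y : I -> R) : R :=
  \sum_i y i * lam i + fine (sigmaA X lam).

Definition conic_hull (S : set ((I -> R) * R)) : set ((I -> R) * R) :=
  [set z | exists (k : nat) (p : 'I_k -> (I -> R) * R) (w : 'I_k -> R),
     (forall j, S (p j) /\ 0 <= w j) /\
     (forall i, z.1 i = \sum_j w j * (p j).1 i) /\
     z.2 = \sum_j w j * (p j).2].

Definition circuit_graph (X : set 'rV[R]_n) : set ((I -> R) * R) :=
  conic_hull ([set phivec X lam | lam in LambdaX X] `|`
              [set ((fun _ => 0), 1)]).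

Definition ray (d : (I -> R) * R) : set ((I -> R) * R) :=
  [set z | exists t : R, 0 <= t /\ (forall i, z.1 i = t * d.1 i) /\
                         z.2 = t * d.2].

Definition extreme_ray (K : set ((I -> R) * R)) (d : (I -> R) * R) : Prop :=
  ((exists i, d.1 i != 0) \/ d.2 != 0) /\
  ray d `<=` K /\
  forall u v, K u -> K v ->
    ray d ((fun i => u.1 i + v.1 i), u.2 + v.2) -> ray d u /\ ray d v.

Definition LambdaXstar (X : set 'rV[R]_n) : set (I -> R) :=
  [set lam | LambdaX X lam /\ extreme_ray (circuit_graph X) (phivec X lam)].

End XCircuits.

From HB Require Import structures.
From mathcomp Require Import all_boot all_order all_algebra.
From mathcomp Require Import boolp classical_sets reals ereal sequences exp.
From mathcomp Require Import ring lra.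
Set Implicit Arguments. Unset Strict Implicit. Unset Printing Implicit Defensive.
Import Order.TTheory GRing.Theory Num.Theory.
Local Open Scope ring_scope.
Local Open Scope classical_set_scope.

(* On a polyhedron, sigma_X(-A nu) is computed by linear
   programming duality: when finite it is attained at a point x and
   certified by nonnegative multipliers on the constraints tight at x (a
   "face witness").  A normalized circuit is determined by its negative
   coordinate and by the zero patterns of itself and of a face witness:
   otherwise the segment through two such circuits could be extended a
   little beyond one of them inside a common face of X, where sigma is
   affine, contradicting irreducibility.  Hence Lambda_X(A), and so Lam,
   is finite.

   For finitely many circuits, Farkas' lemma (proved here by
   Fourier-Motzkin elimination) either yields a linear functional on
   R^A x R that is negative on phi_lam0 and nonnegative on every phi_lam,
   lam in Lam, and on (0, 1), which is dehomogenized using the point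
   (alpha^T x0)_alpha where every phi_lam is nonnegative; or it writes
   phi_lam0 as a conic combination of these generators, and extremality of
   the ray of phi_lam0 puts it on the ray of one generator, which is
   impossible for normalized circuits. *)

Section RealBounds.
Variable R : realFieldType.

Lemma sum_option (T : finType) (F : option T -> R) :
  \sum_o F o = F None + \sum_t F (Some t).
Proof.
rewrite (bigD1 None) //=; congr (_ + _).
rewrite (reindex_omap Some id) => [|[i|] //].
by apply: eq_bigl => t /=; rewrite eqxx.
Qed.

(* Every lower bound in [ls] lies below every upper bound in [us]: a single
   point separates them.  This is the one-variable step of elimination. *)
Lemma separating_point_seq (ls us : seq R) :
  (forall a b, a \in ls -> b \in us -> a <= b) ->
  exists t, (forall a, a \in ls -> a <= t) /\ (forall b, b \in us -> t <= b).
Proof.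
elim: ls => [|a ls IH] H.
  elim: us {H} => [|b us [t [_ Ht]]]; first by exists 0.
  exists (Order.min b t); split => // c; rewrite inE => /orP [/eqP ->|/Ht hc].
    by rewrite ge_min lexx.
  by rewrite ge_min hc orbT.
have [t [Hl Hu]] : exists t, (forall a, a \in ls -> a <= t) /\
    (forall b, b \in us -> t <= b).
  by apply: IH => a' b ha hb; apply: H => //; rewrite inE ha orbT.
exists (Order.max a t); split.
  move=> c; rewrite inE => /orP [/eqP ->|/Hl hc]; first by rewrite le_max lexx.
  by rewrite le_max hc orbT.
by move=> b hb; rewrite ge_max Hu // andbT; apply: H => //; rewrite inE eqxx.
Qed.

Lemma separating_point (C : finType) (P Q : pred C) (L U : C -> R) :
  (forall i j, P i -> Q j -> L i <= U j) ->
  exists t, (forall i, P i -> L i <= t) /\ (forall j, Q j -> t <= U j).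
Proof.
move=> H.
have [t [Hl Hu]] : exists t,
    (forall a, a \in [seq L i | i <- enum P] -> a <= t) /\
    (forall b, b \in [seq U j | j <- enum Q] -> t <= b).
  apply: separating_point_seq => _ _ /mapP [i Pi ->] /mapP [j Qj ->].
  by move: Pi Qj; rewrite !mem_enum; exact: H.
exists t; split=> [i Pi|j Qj]; [apply: Hl | apply: Hu]; apply: map_f;
  by rewrite mem_enum.
Qed.

Lemma uniform_small_scale (C : finType) (P : pred C) (f g : C -> R) :
  (forall c, P c -> 0 < f c) ->
  exists2 e, 0 < e & forall c, P c -> e * `|g c| <= f c.
Proof.
move=> fpos.
have g1 c : 0 < 1 + `|g c| by rewrite ltr_pwDl.
pose e := \big[Order.min/1]_(c | P c) (f c / (1 + `|g c|)).
have e_gt0 : 0 < e.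
  by apply/bigmin_gtP; split => // c Pc; rewrite divr_gt0 ?fpos.
exists e => // c Pc.
have : e <= f c / (1 + `|g c|) by apply: bigmin_le_cond.
rewrite ler_pdivlMr // => /(le_trans _); apply.
by apply: ler_wpM2l; [exact: ltW | lra].
Qed.

Lemma nonneg_extension (C : finType) (P : pred C) (p q : C -> R) :
  (forall c, P c -> 0 <= p c) -> (forall c, P c -> p c = 0 -> q c = 0) ->
  exists2 e, 0 < e & forall e', 0 <= e' <= e ->
    forall c, P c -> 0 <= (1 + e') * p c - e' * q c.
Proof.
move=> p0 pq.
have [e e_gt0 small] : exists2 e, 0 < e & forall c, P c && (p c != 0) ->
    e * `|q c - p c| <= p c.
  by apply: uniform_small_scale => c /andP [Pc pc]; rewrite lt0r pc p0.
exists e => // e' /andP [e'0 e'e] c Pc.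
have [pc0|pc] := eqVneq (p c) 0.
  by rewrite pc0 (pq c Pc pc0) !mulr0 subrr.
have := small c; rewrite Pc pc => /(_ isT) bound.
have := ler_norm (q c - p c); have := normr_ge0 (q c - p c); nra.
Qed.

End RealBounds.

Section Farkas.
Variable R : realFieldType.

Definition feasible (V C : finType) (M : C -> V -> R) (d : C -> R)
  (z : V -> R) : Prop :=
  forall c, \sum_v M c v * z v <= d c.

Definition farkas_certificate (V C : finType) (M : C -> V -> R)
  (d : C -> R) : Prop :=
  exists y : C -> R, [/\ forall c, 0 <= y c,
    forall v, \sum_c y c * M c v = 0 & \sum_c y c * d c < 0].

(* A system without variables is infeasible exactly when a right-hand side
   is negative, which is then a certificate by itself. *)
Lemma certificate_without_variables (V C : finType) (M : C -> V -> R)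
  (d : C -> R) :
  (forall c v, M c v = 0) -> (forall z, ~ feasible M d z) ->
  farkas_certificate M d.
Proof.
move=> M0 infeas.
have [c dc] : exists c, d c < 0.
  apply: contrapT => nneg; apply: (infeas (fun _ => 0)) => c.
  rewrite big1 => [|v _]; last by rewrite mulr0.
  by rewrite leNgt; apply/negP => dc; apply: nneg; exists c.
exists (fun c' => (c' == c)%:R); split.
- by move=> c'; rewrite ler0n.
- by move=> v; rewrite big1 // => c' _; rewrite M0 mulr0.
- rewrite (bigD1 c) //= eqxx mul1r big1 ?addr0 // => c' /negbTE ->.
  by rewrite mul0r.
Qed.

Section FourierMotzkin.
(* One step of Fourier-Motzkin elimination of the variable [v0]: the new
   rows are the rows of [M] not involving [v0], and the positive
   combinations of pairs of rows in which [v0] has opposite signs. *)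
Variables (V C : finType) (M : C -> V -> R) (d : C -> R) (v0 : V).

Definition opposite (i j : C) : bool := (0 < M i v0) && (M j v0 < 0).

Definition elim_row (F : C -> R) (c' : C + C * C) : R :=
  match c' with
  | inl c => if M c v0 == 0 then F c else 0
  | inr (i, j) => if opposite i j then M i v0 * F j - M j v0 * F i else 0
  end.

Definition elimM (c' : C + C * C) (v : V) : R := elim_row (M^~ v) c'.

Lemma elim_row_sum (z : V -> R) (c' : C + C * C) :
  elim_row (fun c => \sum_v M c v * z v) c' = \sum_v elimM c' v * z v.
Proof.
rewrite /elimM; case: c' => [c|[i j]] /=.
  by case: ifP => _ //; rewrite big1 // => v _; rewrite mul0r.
case: ifP => _; last by rewrite big1 // => v _; rewrite mul0r.
rewrite !mulr_sumr -sumrB; apply: eq_bigr => v _; ring.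
Qed.

Lemma elim_row_shift (F : C -> R) (t : R) :
  elim_row (fun c => F c + M c v0 * t) =1 elim_row F.
Proof.
case=> [c|[i j]] /=; case: ifP => // hc; last by ring.
by move/eqP: hc => ->; rewrite mul0r addr0.
Qed.

Lemma elim_feasible (z : V -> R) :
  feasible elimM (elim_row d) z ->
  exists t, feasible M d (fun v => if v == v0 then t else z v).
Proof.
move=> hz; pose zt t v := if v == v0 then t else z v.
pose r c := \sum_v M c v * zt 0 v.
have ztE t c : \sum_v M c v * zt t v = r c + M c v0 * t.
  rewrite /r (bigD1 v0) //= [in RHS](bigD1 v0) //= /zt eqxx mulr0 add0r.
  by rewrite addrC; congr (_ + _); apply: eq_bigr => v /negbTE ->.
have hr c' : elim_row r c' <= elim_row d c'.
  rewrite -(elim_row_shift r (z v0)).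
  have -> : (fun c => r c + M c v0 * z v0) = (fun c => \sum_v M c v * z v).
    apply: funext => c; rewrite -ztE; apply: eq_bigr => v _.
    by rewrite /zt; case: eqP => // ->.
  by rewrite elim_row_sum; exact: hz.
have [t [tlo thi]] : exists t,
    (forall j, M j v0 < 0 -> (d j - r j) / M j v0 <= t) /\
    (forall i, 0 < M i v0 -> t <= (d i - r i) / M i v0).
  apply: separating_point => j i hj hi.
  have := hr (inr (i, j)); rewrite /= /opposite hi hj /=.
  rewrite ler_pdivlMr // mulrAC ler_ndivrMr //; nra.
exists t => c; rewrite ztE.
case: (ltgtP (M c v0) 0) => hc.
- by move: (tlo c hc); rewrite ler_ndivrMr //; lra.
- by move: (thi c hc); rewrite ler_pdivlMr //; lra.
- by move: (hr (inl c)); rewrite /= hc eqxx mul0r; lra.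
Qed.

Definition pullback (y' : C + C * C -> R) (c : C) : R :=
  (if M c v0 == 0 then y' (inl c) else 0)
  + \sum_j (if opposite c j then y' (inr (c, j)) * - M j v0 else 0)
  + \sum_i (if opposite i c then y' (inr (i, c)) * M i v0 else 0).

Lemma pullback_sum (y' : C + C * C -> R) (F : C -> R) :
  \sum_c pullback y' c * F c = \sum_c' y' c' * elim_row F c'.
Proof.
rewrite big_sumType /= [X in _ + X](eq_bigr
  (fun p => y' (inr (p.1, p.2)) * elim_row F (inr (p.1, p.2)))); last by case.
rewrite -(pair_bigA _ (fun i j => y' (inr (i, j)) * elim_row F (inr (i, j)))).
under eq_bigr do rewrite !mulrDl.
rewrite !big_split /= -addrA; congr (_ + _).
  by apply: eq_bigr => c _; case: ifP; rewrite ?mulr0 ?mul0r.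
under eq_bigr do rewrite mulr_suml.
under [X in _ + X]eq_bigr do rewrite mulr_suml.
rewrite [X in _ + X]exchange_big -big_split; apply: eq_bigr => i _.
rewrite -big_split; apply: eq_bigr => j _ /=.
by case: ifP => _; [ring | rewrite !mul0r mulr0 addr0].
Qed.

Lemma pullback_ge0 (y' : C + C * C -> R) :
  (forall c', 0 <= y' c') -> forall c, 0 <= pullback y' c.
Proof.
move=> hy c; rewrite /pullback !addr_ge0 //; first by case: ifP.
- apply: sumr_ge0 => j _; case: ifP => // /andP [_ hj].
  by rewrite mulr_ge0 // oppr_ge0 ltW.
- apply: sumr_ge0 => i _; case: ifP => // /andP [hi _].
  by rewrite mulr_ge0 // ltW.
Qed.

Lemma elim_certificate :
  farkas_certificate elimM (elim_row d) -> farkas_certificate M d.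
Proof.
move=> [y' [hy0 hyM hyd]]; exists (pullback y'); split.
- exact: pullback_ge0.
- by move=> v; rewrite (pullback_sum y' (M^~ v)); exact: hyM.
- by rewrite pullback_sum.
Qed.

Lemma elim_support (S : {set V}) :
  (forall c v, v \notin S -> M c v = 0) ->
  forall c' v, v \notin S :\ v0 -> elimM c' v = 0.
Proof.
move=> M0 c' v; rewrite !inE negb_and negbK => /orP [/eqP ->|vS].
  case: c' => [c|[i j]] /=; first by case: eqP.
  by case: ifP => _ //; rewrite mulrC subrr.
by case: c' => [c|[i j]] /=; rewrite !(M0 _ v vS) ?mulr0 ?subrr ?if_same.
Qed.

End FourierMotzkin.

(* Farkas' lemma for systems of linear inequalities, by Fourier-Motzkin
   elimination of the variables in the support [S] one at a time. *)
Lemma farkas_support (k : nat) : forall (V C : finType) (M : C -> V -> R)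
  (d : C -> R) (S : {set V}), #|S| = k ->
  (forall c v, v \notin S -> M c v = 0) ->
  (forall z, ~ feasible M d z) -> farkas_certificate M d.
Proof.
elim: k => [|k IH] V C M d S cardS M0 infeas.
  apply: certificate_without_variables infeas => c v.
  by apply: M0; rewrite (card0_eq cardS).
have [v0 v0S] : exists v0, v0 \in S by apply/card_gt0P; rewrite cardS.
apply: (elim_certificate (v0 := v0)).
apply: (IH _ _ _ _ (S :\ v0)); first by move: cardS; rewrite (cardsD1 v0) v0S => -[].
  exact: elim_support.
by move=> z /elim_feasible [t]; apply: infeas.
Qed.

Theorem farkas (V C : finType) (M : C -> V -> R) (d : C -> R) :
  (forall z, ~ feasible M d z) -> farkas_certificate M d.
Proof. by apply: (farkas_support (S := [set: V]%SET)) => // c v; rewrite inE. Qed.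

Theorem farkas_cone (K V : finType) (g : K -> V -> R) (p : V -> R) :
  (exists z, \sum_v p v * z v < 0 /\ forall k, 0 <= \sum_v g k v * z v) \/
  (exists w : K -> R, (forall k, 0 <= w k) /\
                      forall v, p v = \sum_k w k * g k v).
Proof.
pose M (c : option K) v := if c is Some k then - g k v else p v.
pose d (c : option K) : R := if c is Some k then 0 else -1.
case: (pselect (exists z, feasible M d z)) => [[z hz]|infeas].
  left; exists z; split; first by have := hz None; rewrite /M /d /=; lra.
  move=> k; have := hz (Some k); rewrite /M /d /=.
  by under eq_bigr do rewrite mulNr; rewrite sumrN oppr_le0.
right; have [y [y0 yM yd]] := farkas (fun z hz => infeas (ex_intro _ z hz)).
move: yd; rewrite sum_option /d big1 => [|k _]; last by rewrite mulr0.
rewrite addr0 mulrN1 oppr_lt0 => yN.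
exists (fun k => y (Some k) / y None); split => [k|v].
  by rewrite divr_ge0 ?y0 ?ltW.
apply: (mulfI (lt0r_neq0 yN)); rewrite mulr_sumr.
have := yM v; rewrite sum_option /M => /eqP; rewrite addr_eq0 => /eqP ->.
rewrite -sumrN; apply: eq_bigr => k _; rewrite mulrN opprK.
by field; exact: lt0r_neq0.
Qed.

End Farkas.

Section InnerProduct.
Variables (R : realType) (n : nat).

Lemma dotp_suml (T : finType) (w : T -> R) (y : T -> 'rV[R]_n) (x : 'rV[R]_n) :
  dotp (\sum_t w t *: y t) x = \sum_t w t * dotp (y t) x.
Proof.
rewrite /dotp; under eq_bigr do rewrite summxE mulr_suml.
rewrite exchange_big; apply: eq_bigr => t _.
by rewrite mulr_sumr; apply: eq_bigr => j _; rewrite mxE mulrA.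
Qed.

Lemma dotpZl (e : R) (y x : 'rV[R]_n) : dotp (e *: y) x = e * dotp y x.
Proof. by rewrite /dotp mulr_sumr; apply: eq_bigr => j _; rewrite mxE mulrA. Qed.

Lemma dotpNl (y x : 'rV[R]_n) : dotp (- y) x = - dotp y x.
Proof. by rewrite /dotp -sumrN; apply: eq_bigr => j _; rewrite mxE mulNr. Qed.

Lemma dotpDl (y1 y2 x : 'rV[R]_n) : dotp (y1 + y2) x = dotp y1 x + dotp y2 x.
Proof. by rewrite /dotp -big_split; apply: eq_bigr => j _; rewrite mxE mulrDl. Qed.

Lemma dotp_addZr (y x1 x2 : 'rV[R]_n) (e : R) :
  dotp y (x1 + e *: x2) = dotp y x1 + e * dotp y x2.
Proof.
rewrite /dotp mulr_sumr -big_split /=; apply: eq_bigr => j _.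
by rewrite !mxE; ring.
Qed.

Lemma dotp_row (y : 'rV[R]_n) (z : 'I_n -> R) :
  dotp y (\row_j z j) = \sum_j y 0 j * z j.
Proof. by apply: eq_bigr => j _; rewrite mxE. Qed.

End InnerProduct.

Definition hpolyhedron (R : realType) (n m : nat) (a : 'I_m -> 'rV[R]_n)
  (b : 'I_m -> R) : set 'rV[R]_n :=
  [set x | forall k, dotp (a k) x <= b k].

Section LinearProgramming.
Variables (R : realType) (n m : nat) (a : 'I_m -> 'rV[R]_n) (b : 'I_m -> R).
Local Notation X := (hpolyhedron a b).

Lemma weak_duality (w : 'I_m -> R) (x : 'rV[R]_n) :
  (forall k, 0 <= w k) -> X x -> dotp (\sum_k w k *: a k) x <= \sum_k w k * b k.
Proof.
move=> w0 Xx; rewrite dotp_suml; apply: ler_sum => k _.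
by rewrite ler_wpM2l.
Qed.

Lemma certificate_vector (mu : R) (w : 'I_m -> R) (c : 'rV[R]_n)
  (g : 'I_m -> 'rV[R]_n) :
  (forall v, mu * - c 0 v + \sum_k w k * g k 0 v = 0) ->
  \sum_k w k *: g k = mu *: c.
Proof.
move=> h; apply/rowP => v; rewrite summxE !mxE.
have /eqP := h v; rewrite mulrN addrC subr_eq0 => /eqP <-.
by apply: eq_bigr => k _; rewrite mxE.
Qed.

Lemma sup_attained (c : 'rV[R]_n) :
  X !=set0 -> sigmaX X c \is a fin_num ->
  exists2 x, X x & sigmaX X c = (dotp c x)%:E.
Proof.
move=> [x0 Xx0] sfin; set s := fine (sigmaX X c).
have sE : sigmaX X c = s%:E by rewrite fineK.
have ub x : X x -> dotp c x <= s.
  by move=> Xx; rewrite -lee_fin -sE; apply: ereal_sup_ubound; exists x.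
apply: contrapT => unattained.
pose M (o : option 'I_m) (v : 'I_n) := if o is Some k then a k 0 v else - c 0 v.
pose d (o : option 'I_m) := if o is Some k then b k else - s.
have infeas z : ~ feasible M d z.
  move=> hz; pose x := \row_j z j.
  have Xx : X x by move=> k; rewrite dotp_row; exact: (hz (Some k)).
  apply: unattained; exists x => //; rewrite sE; congr EFin; apply/eqP.
  rewrite eq_le ub // andbT; have := hz None.
  rewrite /M /d /= -lerN2 opprK -sumrN dotp_row.
  by under eq_bigr do rewrite mulNr opprK.
have [y [y0 yM yd]] := farkas infeas.
set mu := y None; set w := fun k => y (Some k).
have cert := @certificate_vector mu w c a (fun v => etrans (esym
  (sum_option _)) (yM v)).
move: yd; rewrite sum_option /= -/mu mulrN => yd.
have bound x : X x -> mu * dotp c x <= \sum_k w k * b k.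
  by move=> Xx; rewrite -dotpZl -cert weak_duality // => k; apply: y0.
have [mu0|mu_gt0] := eqVneq mu 0.
  by move: (bound x0 Xx0) yd; rewrite mu0 mul0r; lra.
have {}mu_gt0 : 0 < mu by rewrite lt0r mu_gt0 y0.
have : s <= (\sum_k w k * b k) / mu.
  rewrite -lee_fin -sE; apply: ge_ereal_sup => _ [x Xx <-].
  by rewrite lee_fin ler_pdivlMr // mulrC bound.
by rewrite ler_pdivlMr // => sle; move: yd; rewrite mulrC; lra.
Qed.

Lemma sigma_at_tight (c x : 'rV[R]_n) (w : 'I_m -> R) :
  X x -> (forall k, 0 <= w k) -> c = \sum_k w k *: a k ->
  (forall k, w k != 0 -> dotp (a k) x = b k) ->
  sigmaX X c = (dotp c x)%:E.
Proof.
move=> Xx w0 cE tight.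
have value : dotp c x = \sum_k w k * b k.
  rewrite cE dotp_suml; apply: eq_bigr => k _.
  by have [->|/tight ->] := eqVneq (w k) 0; rewrite ?mul0r.
apply/eqP; rewrite eq_le; apply/andP; split.
  apply: ge_ereal_sup => _ [x' Xx' <-].
  by rewrite lee_fin value cE weak_duality.
by apply: ereal_sup_ubound; exists x.
Qed.

Section Maximiser.
Variables (c x : 'rV[R]_n).
Hypotheses (Xx : X x) (opt : forall x', X x' -> dotp c x' <= dotp c x).

Lemma no_improving_direction (z : 'rV[R]_n) :
  (forall k, dotp (a k) x == b k -> dotp (a k) z <= 0) -> dotp c z <= 0.
Proof.
move=> tangent; rewrite leNgt; apply/negP => cz.
have [e e_gt0 small] : exists2 e, 0 < e & forall k,
    ~~ (dotp (a k) x == b k) -> e * `|dotp (a k) z| <= b k - dotp (a k) x.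
  by apply: uniform_small_scale => k loose; rewrite subr_gt0 lt_neqAle loose Xx.
have : X (x + e *: z).
  move=> k; rewrite dotp_addZr.
  have [tk|loose] := boolP (dotp (a k) x == b k).
    apply: ler_wnDr; last by rewrite (eqP tk).
    exact: mulr_ge0_le0 (ltW e_gt0) (tangent k tk).
  have := small k loose; have := ler_norm (dotp (a k) z).
  have := ltW e_gt0; nra.
move=> /opt; rewrite dotp_addZr; nra.
Qed.

Lemma kkt : exists w : 'I_m -> R, [/\ forall k, 0 <= w k,
  c = \sum_k w k *: a k & forall k, w k != 0 -> dotp (a k) x = b k].
Proof.
pose tight k := dotp (a k) x == b k.
pose g k := if tight k then a k else 0.
pose M (o : option 'I_m) (v : 'I_n) := if o is Some k then g k 0 v else - c 0 v.
pose d (o : option 'I_m) : R := if o is Some k then 0 else -1.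
have infeas z : ~ feasible M d z.
  move=> hz; have : dotp c (\row_j z j) <= 0.
    apply: no_improving_direction => k tk; rewrite dotp_row.
    by have := hz (Some k); rewrite /M /g /d /tight tk.
  rewrite dotp_row; have := hz None; rewrite /M /d.
  under eq_bigr do rewrite mulNr; rewrite sumrN; lra.
have [y [y0 yM yd]] := farkas infeas.
set mu := y None; set w := fun k => y (Some k).
have cert := @certificate_vector mu w c g (fun v => etrans (esym
  (sum_option _)) (yM v)).
move: yd; rewrite sum_option big1 => [|k _]; last by rewrite mulr0.
rewrite addr0 mulrN1 oppr_lt0 -/mu => mu_gt0.
exists (fun k => if tight k then w k / mu else 0); split.
- by move=> k; case: ifP => // _; rewrite divr_ge0 ?y0 ?ltW.
- apply: (scalerI (lt0r_neq0 mu_gt0)); rewrite -cert scaler_sumr.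
  apply: eq_bigr => k _; rewrite /g scalerA; case: ifP => _; last first.
    by rewrite mulr0 scale0r scaler0.
  by rewrite mulrC mulfVK // lt0r_neq0.
- by move=> k; rewrite /tight; case: (dotp (a k) x =P b k); rewrite ?eqxx.
Qed.

End Maximiser.
End LinearProgramming.

Section FaceWitness.
Variables (R : realType) (n : nat) (I : finType) (alpha : I -> 'rV[R]_n).
Variables (m : nat) (a : 'I_m -> 'rV[R]_n) (b : 'I_m -> R).
Local Notation X := (hpolyhedron a b).

Lemma Amul_comb (u v : I -> R) (p q : R) :
  Amul alpha (fun i => p * u i + q * v i) = p *: Amul alpha u + q *: Amul alpha v.
Proof.
rewrite /Amul !scaler_sumr -big_split; apply: eq_bigr => i _.
by rewrite scalerDl !scalerA.
Qed.

(* A certificate for the value of sigma_X(-A nu): a point [x] of [X] and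
   nonnegative multipliers [w], supported on constraints tight at [x], with
   [-A nu = sum_k w_k a_k]. *)
Definition face_witness (nu : I -> R) (x : 'rV[R]_n) (w : 'I_m -> R) : Prop :=
  [/\ X x, forall k, 0 <= w k, - Amul alpha nu = \sum_k w k *: a k &
      forall k, w k != 0 -> dotp (a k) x = b k].

Lemma face_witness_sigma (nu : I -> R) (x : 'rV[R]_n) (w : 'I_m -> R) :
  face_witness nu x w -> sigmaA alpha X nu = (dotp (- Amul alpha nu) x)%:E.
Proof. by case=> Xx w0 nuE tight; apply: (sigma_at_tight Xx w0 nuE). Qed.

Lemma face_witness_exists (nu : I -> R) :
  X !=set0 -> sigmaA alpha X nu \is a fin_num ->
  exists x w, face_witness nu x w.
Proof.
move=> Xne sfin; have [x Xx sE] := sup_attained Xne sfin.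
have opt x' : X x' -> dotp (- Amul alpha nu) x' <= dotp (- Amul alpha nu) x.
  by move=> Xx'; rewrite -lee_fin -sE; apply: ereal_sup_ubound; exists x'.
by have [w [w0 nuE tight]] := kkt Xx opt; exists x, w.
Qed.

Lemma face_witness_comb (nu1 nu2 : I -> R) (x : 'rV[R]_n) (w1 w2 : 'I_m -> R)
  (p q : R) :
  face_witness nu1 x w1 -> face_witness nu2 x w2 ->
  (forall k, 0 <= p * w1 k + q * w2 k) ->
  face_witness (fun i => p * nu1 i + q * nu2 i) x (fun k => p * w1 k + q * w2 k).
Proof.
move=> [Xx _ nu1E t1] [_ _ nu2E t2] w0; split => //.
  rewrite Amul_comb opprD -!scalerN nu1E nu2E !scaler_sumr -big_split.
  by apply: eq_bigr => k _; rewrite scalerDl !scalerA.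
move=> k; have [w1k|/t1 ->//] := eqVneq (w1 k) 0.
have [w2k|/t2 ->//] := eqVneq (w2 k) 0.
by rewrite w1k w2k !mulr0 addr0 eqxx.
Qed.

Lemma face_witness_move (nu nu' : I -> R) (x x' : 'rV[R]_n) (w w' : 'I_m -> R) :
  face_witness nu x w -> face_witness nu' x' w' ->
  (forall k, w k != 0 -> w' k != 0) -> face_witness nu x' w.
Proof. by move=> [_ w0 nuE _] [Xx' _ _ t'] sub; split => // k /sub /t'. Qed.

(* Two vectors with witnesses at the same point lie on a common face of
   [X], on which sigma_X(-A .) is affine. *)
Lemma affine_on_common_face (nu1 nu2 : I -> R) (x : 'rV[R]_n)
  (w1 w2 : 'I_m -> R) :
  face_witness nu1 x w1 -> face_witness nu2 x w2 ->
  affine_on_segment alpha X nu1 nu2.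
Proof.
move=> W1 W2; have S1 := face_witness_sigma W1; have S2 := face_witness_sigma W2.
split; first by rewrite S1.
split; first by rewrite S2.
move=> s /andP [s0 s1].
have W := face_witness_comb (p := s) (q := 1 - s) W1 W2.
rewrite (face_witness_sigma (W _)) ?S1 ?S2; last first.
  by case: W1 W2 => [_ w10 _ _] [_ w20 _ _] k; rewrite addr_ge0 ?mulr_ge0 ?subr_ge0.
by rewrite Amul_comb opprD -!scalerN dotpDl !dotpZl.
Qed.

End FaceWitness.

Section Circuits.
Variables (R : realType) (n : nat) (I : finType) (alpha : I -> 'rV[R]_n).

Lemma circuit_sigma_fin (X : set 'rV[R]_n) (lam : I -> R) :
  X !=set0 -> LambdaX alpha X lam -> sigmaA alpha X lam \is a fin_num.
Proof.
move=> [x0 Xx0] [beta [[_ [_ [sfin _]]] _]].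
have : ((dotp (- Amul alpha lam) x0)%:E <= sigmaA alpha X lam)%E.
  by apply: ereal_sup_ubound; exists x0.
rewrite fin_numE (lt_eqF sfin) andbT.
by case: (sigmaA alpha X lam).
Qed.

Lemma proportional_normalized (u v : I -> R) (beta : I) :
  u beta = -1 -> v beta = -1 -> proportional u v -> u = v.
Proof.
move=> ub vb [c uv]; have c1 : c = 1.
  by case: uv => /(_ beta); rewrite ub vb; lra.
by apply: funext => i; case: uv => ->; rewrite c1 mul1r.
Qed.

Variables (m : nat) (a : 'I_m -> 'rV[R]_n) (b : 'I_m -> R).
Local Notation X := (hpolyhedron a b).

(* Two normalized X-circuits with the same negative coordinate, and face
   witnesses with the same zero patterns, coincide: otherwise [lam1] would
   lie strictly inside a segment from [lam2] to a point slightly beyond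
   [lam1], on which sigma is affine. *)
Lemma circuit_unique (beta : I) (lam1 lam2 : I -> R) (x1 x2 : 'rV[R]_n)
  (w1 w2 : 'I_m -> R) :
  X_circuit alpha X beta lam1 -> lam1 beta = -1 ->
  face_witness alpha a b lam1 x1 w1 ->
  X_circuit alpha X beta lam2 -> lam2 beta = -1 ->
  face_witness alpha a b lam2 x2 w2 ->
  (forall i, (lam1 i == 0) = (lam2 i == 0)) ->
  (forall k, (w1 k == 0) = (w2 k == 0)) -> lam1 = lam2.
Proof.
move=> [[N1 sum1] [_ [_ irreducible]]] b1 W1 [[N2 sum2] _] b2 W2 zl zw.
apply: contrapT => neq.
have zero_lam i : lam1 i = 0 -> lam2 i = 0 by move/eqP; rewrite zl => /eqP.
have zero_w k : w1 k = 0 -> w2 k = 0 by move/eqP; rewrite zw => /eqP.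
have [e1 e1_gt0 ext1] := nonneg_extension (P := fun i => i != beta) N1
  (fun i _ => zero_lam i).
have [e2 e2_gt0 ext2] := nonneg_extension (P := predT) (p := w1) (q := w2)
  (fun k _ => let: And4 _ w0 _ _ := W1 in w0 k) (fun k _ => zero_w k).
set e := Order.min e1 e2.
have e_gt0 : 0 < e by rewrite lt_min e1_gt0.
have [ee1 ee2] : e <= e1 /\ e <= e2 by split; rewrite ge_min lexx ?orbT.
pose mu i := (1 + e) * lam1 i + (- e) * lam2 i.
have W2' := face_witness_move W2 W1 (fun k => contra_neq (zero_w k)).
have Wmu : face_witness alpha a b mu x1 (fun k => (1 + e) * w1 k + (- e) * w2 k).
  apply: face_witness_comb W1 W2' _ => k.
  by rewrite mulNr; apply: ext2 => //; rewrite ltW.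
have mub : mu beta = -1 by rewrite /mu b1 b2; lra.
have e1_neq0 : 1 + e != 0 by rewrite lt0r_neq0 // addr_gt0.
apply: irreducible; exists mu, lam2, (1 + e)^-1; split.
- split; last by split.
  split; last by rewrite /mu big_split /= -!mulr_sumr sum1 sum2; lra.
  by move=> i ib; rewrite /mu mulNr; apply: ext1 => //; rewrite ltW.
- move=> /(proportional_normalized mub b2) mu2; apply: neq.
  apply: funext => i; have := congr1 (@^~ i) mu2; rewrite /mu => h.
  by apply: (mulfI e1_neq0); lra.
- by rewrite invr_gt0 addr_gt0 //= invf_lt1 ?addr_gt0 // ltrDl.
- by move=> i; rewrite /mu; field.
- exact: affine_on_common_face Wmu W2'.
Qed.

(* Lambda_X(A) is finite: a normalized X-circuit is determined by finitely
   many discrete data, namely its negative coordinate and the zero patterns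
   of the circuit and of one of its face witnesses. *)
Lemma circuit_code : X !=set0 ->
  exists (F : finType) (code : (I -> R) -> F), forall l1 l2,
    LambdaX alpha X l1 -> LambdaX alpha X l2 -> code l1 = code l2 -> l1 = l2.
Proof.
move=> Xne.
pose data l (p : I * 'rV[R]_n * ('I_m -> R)) :=
  [/\ X_circuit alpha X p.1.1 l, l p.1.1 = -1 & face_witness alpha a b l p.1.2 p.2].
have has_data l : LambdaX alpha X l -> exists p, data l p.
  move=> Ll; have [beta [circ lb]] := Ll.
  have [x [w W]] := face_witness_exists Xne (circuit_sigma_fin Xne Ll).
  by exists (beta, x, w).
pose code l : option (I * {ffun I -> bool} * {ffun 'I_m -> bool}) :=
  if pselect (exists p, data l p) is left h then
    let p := proj1_sig (cid h) in
    Some (p.1.1, [ffun i => l i == 0], [ffun k => p.2 k == 0])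
  else None.
exists (option (I * {ffun I -> bool} * {ffun 'I_m -> bool}))%type, code.
move=> l1 l2 /has_data h1 /has_data h2; rewrite /code.
case: pselect => [{}h1|//]; case: pselect => [{}h2|//].
case: (cid h1) (cid h2) => [[[be1 x1] w1] [c1 b1 W1]] [[[be2 x2] w2] [c2 b2 W2]].
move=> /= [e_be zl zw]; rewrite -{}e_be in c2 b2.
apply: (circuit_unique c1 b1 W1 c2 b2 W2) => [i|k].
- by have := congr1 (fun f : {ffun I -> bool} => f i) zl; rewrite !ffunE.
- by have := congr1 (fun f : {ffun 'I_m -> bool} => f k) zw; rewrite !ffunE.
Qed.

End Circuits.

Lemma finite_subfamily (T : Type) (P Q : set T) :
  (exists (F : finType) (code : T -> F),
     forall x y, P x -> P y -> code x = code y -> x = y) ->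
  Q `<=` P ->
  exists (K : finType) (g : K -> T), (forall k, Q (g k)) /\
                                     (forall x, Q x -> exists k, g k = x).
Proof.
move=> [F [code inj]] QP.
pose K := {k : F | `[< exists x, Q x /\ code x = k >]}.
pose g (k : K) : T := proj1_sig (cid (asboolW (valP k))).
exists K, g; split => [k|x Qx].
  by rewrite /g; case: cid => x [].
have codeQ : `[< exists y, Q y /\ code y = code x >] by apply/asboolP; exists x.
exists (exist _ (code x) codeQ); rewrite /g; case: cid => y /= [Qy yx].
exact: inj (QP _ Qy) (QP _ Qx) yx.
Qed.

Section Separation.
Variables (R : realType) (n : nat) (I : finType) (alpha : I -> 'rV[R]_n).
Variable X : set 'rV[R]_n.

(* An element of R^A x R as a vector indexed by [option I], the constant
   term sitting at [None], and the homogeneous pairing with such vectors. *)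
Definition hvec (p : (I -> R) * R) (v : option I) : R :=
  if v is Some i then p.1 i else p.2.

Definition hpair (p : (I -> R) * R) (z : option I -> R) : R :=
  \sum_v hvec p v * z v.

Lemma hpairE (p : (I -> R) * R) (z : option I -> R) :
  hpair p z = \sum_i p.1 i * z (Some i) + p.2 * z None.
Proof. by rewrite /hpair sum_option addrC. Qed.

Lemma hpair_lin (p : (I -> R) * R) (z z' : option I -> R) (t : R) :
  hpair p (fun v => t * z v + z' v) = t * hpair p z + hpair p z'.
Proof.
rewrite /hpair mulr_sumr -big_split; apply: eq_bigr => v _ /=; ring.
Qed.

Lemma phi_dehomogenize (lam : I -> R) (z : option I -> R) : z None != 0 ->
  phi alpha X lam (fun i => z (Some i) / z None) =
  hpair (phivec alpha X lam) z / z None.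
Proof.
move=> zN; rewrite hpairE /phi mulrDl mulfK // mulr_suml; congr (_ + _).
by apply: eq_bigr => i _; rewrite mulrC mulrA.
Qed.

(* Every point [x0] of [X] gives [y0 = (alpha^T x0)_alpha] with
   [phi_lam(y0) >= 0] for all circuits, since sigma_X(-A lam) is at least
   its value at [x0]. *)
Lemma phi_nonneg_at_point (x0 : 'rV[R]_n) (lam : I -> R) :
  X x0 -> LambdaX alpha X lam -> 0 <= phi alpha X lam (fun i => dotp (alpha i) x0).
Proof.
move=> Xx0 Ll; have sfin := circuit_sigma_fin (ex_intro _ x0 Xx0) Ll.
have : ((dotp (- Amul alpha lam) x0)%:E <= sigmaA alpha X lam)%E.
  by apply: ereal_sup_ubound; exists x0.
rewrite -(fineK sfin) lee_fin dotpNl /Amul dotp_suml /phi.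
under eq_bigr do rewrite mulrC.
lra.
Qed.

(* A homogeneous separator [z] of [lam0] from a family [S] of circuits,
   nonnegative on [(0, 1)], yields an affine separator: adding a large
   multiple of [z] to the point [(y0, 1)] keeps [S] nonnegative, makes
   [lam0] negative, and keeps the last coordinate positive. *)
Lemma affine_separator (S : set (I -> R)) (lam0 : I -> R) (x0 : 'rV[R]_n)
  (z : option I -> R) :
  X x0 -> S `<=` LambdaX alpha X -> LambdaX alpha X lam0 ->
  hpair (phivec alpha X lam0) z < 0 -> 0 <= z None ->
  (forall l, S l -> 0 <= hpair (phivec alpha X l) z) ->
  exists y, (forall l, S l -> 0 <= phi alpha X l y) /\ phi alpha X lam0 y < 0.
Proof.
move=> Xx0 SL L0 z0 zN zS.
pose y0 (v : option I) := if v is Some i then dotp (alpha i) x0 else 1.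
have y0E l : hpair (phivec alpha X l) y0 = phi alpha X l (fun i => y0 (Some i)).
  by rewrite hpairE /phi mulr1; congr (_ + _); apply: eq_bigr => i _; rewrite mulrC.
pose t := (phi alpha X lam0 (fun i => y0 (Some i)) + 1) /
  - hpair (phivec alpha X lam0) z.
have t0 : 0 <= t.
  apply: divr_ge0; last by rewrite oppr_ge0 ltW.
  by rewrite addr_ge0 //; exact: phi_nonneg_at_point.
pose w v := t * z v + y0 v.
have wN : 0 < w None by rewrite /w /= ltr_wpDl // mulr_ge0.
have wE l : phi alpha X l (fun i => w (Some i) / w None) =
    (t * hpair (phivec alpha X l) z + phi alpha X l (fun i => y0 (Some i)))
    / w None.
  by rewrite phi_dehomogenize ?lt0r_neq0 // hpair_lin y0E.
exists (fun i => w (Some i) / w None); split => [l Sl|].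
  rewrite wE divr_ge0 ?(ltW wN) // addr_ge0 ?(mulr_ge0 t0) ?zS //.
  exact: phi_nonneg_at_point (SL _ Sl).
have tz : t * hpair (phivec alpha X lam0) z =
    - (phi alpha X lam0 (fun i => y0 (Some i)) + 1).
  by rewrite /t; field; exact: ltr0_neq0.
by rewrite (wE lam0) pmulr_llt0 ?invr_gt0 // tz; lra.
Qed.

Lemma conic_hull_sum (S : set ((I -> R) * R)) (K : finType)
  (p : K -> (I -> R) * R) (w : K -> R) :
  (forall k, S (p k) /\ 0 <= w k) ->
  conic_hull S ((fun i => \sum_k w k * (p k).1 i), \sum_k w k * (p k).2).
Proof.
move=> Sp; exists #|K|, (fun j => p (enum_val j)), (fun j => w (enum_val j)).
split=> [j|]; first exact: Sp.
split=> [i|]; first by rewrite -(big_enum_val (A := K) (fun k => w k * (p k).1 i)).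
by rewrite -(big_enum_val (A := K) (fun k => w k * (p k).2)).
Qed.

Lemma extreme_ray_generator (S : set ((I -> R) * R)) (d : (I -> R) * R)
  (K : finType) (p : K -> (I -> R) * R) (w : K -> R) :
  extreme_ray (conic_hull S) d -> (forall k, S (p k) /\ 0 <= w k) ->
  (forall v, hvec d v = \sum_k w k * hvec (p k) v) ->
  exists2 k, 0 < w k & ray d ((fun i => w k * (p k).1 i), w k * (p k).2).
Proof.
move=> [d_neq0 [_ extreme]] Sp dE.
have [k wk] : exists k, 0 < w k.
  apply: contrapT => none; have w0 k : w k = 0.
    apply/eqP; rewrite eq_le (proj2 (Sp k)) andbT leNgt.
    by apply/negP => wk; apply: none; exists k.
  have d0 v : hvec d v = 0 by rewrite dE big1 // => k' _; rewrite w0 mul0r.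
  case: d_neq0 => [[i]|]; [have := d0 (Some i) | have := d0 None];
    by rewrite /hvec => -> /eqP.
pose w1 k' := if k' == k then w k' else 0.
pose w2 k' := if k' == k then 0 else w k'.
have w1E (g : K -> R) : \sum_k' w1 k' * g k' = w k * g k.
  rewrite (bigD1 k) //= /w1 eqxx big1 ?addr0 // => k' /negbTE ->.
  by rewrite mul0r.
have w12E (g : K -> R) :
    \sum_k' w1 k' * g k' + \sum_k' w2 k' * g k' = \sum_k' w k' * g k'.
  rewrite -big_split; apply: eq_bigr => k' _ /=; rewrite /w1 /w2.
  by case: eqP => _; rewrite mul0r ?addr0 ?add0r.
have Sw1 k' : S (p k') /\ 0 <= w1 k' by case: (Sp k'); rewrite /w1; case: eqP.
have Sw2 k' : S (p k') /\ 0 <= w2 k' by case: (Sp k'); rewrite /w2; case: eqP.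
have on_ray : ray d
    ((fun i => \sum_k' w1 k' * (p k').1 i + \sum_k' w2 k' * (p k').1 i),
     \sum_k' w1 k' * (p k').2 + \sum_k' w2 k' * (p k').2).
  exists 1; split=> //; split=> [i|]; rewrite mul1r w12E.
    by have /= -> := dE (Some i).
  by have /= -> := dE None.
have [[t [t0 [/= t1 /= t2]]] _] :=
  extreme _ _ (conic_hull_sum Sw1) (conic_hull_sum Sw2) on_ray.
exists k => //; exists t; split=> //; split=> [i|] /=.
  by rewrite -(w1E (fun k' => (p k').1 i)) -t1.
by rewrite -(w1E (fun k' => (p k').2)) -t2.
Qed.

(* A positive multiple of a normalized circuit that lies on the ray of
   another one is that circuit: comparing the negative coordinates forces
   both the indices and the scalars to agree. *)
Lemma normalized_ray_eq (l lam : I -> R) (s t : R) :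
  LambdaX alpha X l -> LambdaX alpha X lam -> 0 < s -> 0 <= t ->
  (forall i, s * l i = t * lam i) -> l = lam.
Proof.
move=> [bl [_ lb]] [b0 [[[N0 _] _] lamb]] s0 t0 sl.
have slb := sl bl; rewrite lb mulrN1 in slb.
have bl0 : bl = b0.
  apply: contrapT => /eqP ne; have := mulr_ge0 t0 (N0 bl ne); rewrite -slb.
  by rewrite oppr_ge0 leNgt s0.
have st : s = t by move: slb; rewrite bl0 lamb mulrN1 => /oppr_inj.
by apply: funext => i; apply: (mulfI (lt0r_neq0 s0)); rewrite sl st.
Qed.

(* The generator [(0, 1)] of the circuit graph is not on the ray of any
   circuit, whose negative coordinate is nonzero. *)
Lemma unit_generator_off_ray (lam : I -> R) (s : R) :
  LambdaX alpha X lam -> 0 < s ->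
  ~ ray (phivec alpha X lam) ((fun _ => s * 0), s * 1).
Proof.
move=> [b0 [_ lamb]] s0 [t [_ [t1 t2]]].
have := t1 b0; rewrite /= lamb mulr0 mulrN1 => /eqP; rewrite eq_sym oppr_eq0.
move=> /eqP t_eq0; move: t2 => /=; rewrite t_eq0 mul0r mulr1 => s_eq0.
by move: s0; rewrite s_eq0 ltxx.
Qed.

(* Either
   Farkas' lemma provides a homogeneous separator, or phi_lam0 is a conic
   combination of the phi_(g k) and of [(0, 1)]; by extremality it then
   lies on the ray of one of these generators, which is impossible. *)
Lemma separate_from_finite_family (K : finType) (g : K -> I -> R)
  (lam0 : I -> R) (x0 : 'rV[R]_n) :
  X x0 -> (forall k, LambdaX alpha X (g k)) -> LambdaXstar alpha X lam0 ->
  (forall k, g k <> lam0) ->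
  exists y, (forall k, 0 <= phi alpha X (g k) y) /\ phi alpha X lam0 y < 0.
Proof.
move=> Xx0 gL [L0 extreme0] g_neq.
pose gen (o : option K) := if o is Some k then phivec alpha X (g k)
                           else ((fun _ => 0), 1).
case: (farkas_cone (fun o => hvec (gen o)) (hvec (phivec alpha X lam0)))
  => [[z [z0 zgen]] | [w [w0 wE]]].
- have zN : 0 <= z None.
    have := zgen None; rewrite sum_option big1 ?addr0 ?mul1r //.
    by move=> i _; rewrite /= mul0r.
  have [||y [yg ylam0]] := affine_separator (S := range g) Xx0 _ L0 z0 zN _.
  + by move=> _ [k _ <-].
  + by move=> _ [k _ <-]; exact: zgen (Some k).
  + by exists y; split=> // k; apply: yg; exists k.
- exfalso; have [o|o wo on_ray] := extreme_ray_generator extreme0 _ wE.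
    split=> //; case: o => [k|]; last by right.
    by left; exists (g k).
  case: o wo on_ray => [k|] wo; last exact: unit_generator_off_ray L0 wo.
  case=> t [t0 [t1 _]]; apply: (g_neq k).
  exact: normalized_ray_eq (gL k) L0 wo t0 t1.
Qed.

End Separation.

Theorem lemma5p12 (R : realType) (n : nat) (I : finType)
  (alpha : I -> 'rV[R]_n) (X : set 'rV[R]_n)
  (hI : (0 < #|I|)%N) (halpha : injective alpha)
  (hXne : X !=set0) (hXpoly : polyhedron X)
  (hexp : exp_lin_indep alpha X)
  (Lam : set (I -> R)) (hLam : Lam `<` LambdaXstar alpha X) :
  exists ytil : I -> R,
    (forall lam', Lam lam' -> 0 <= phi alpha X lam' ytil) /\
    exists lam, LambdaXstar alpha X lam /\ ~ Lam lam /\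
                phi alpha X lam ytil < 0.
Proof.
have [m [a [b XE]]] := hXpoly; have {}XE : X = hpolyhedron a b := XE; subst X.
have [x0 Xx0] := hXne; case: hLam => Lam_star Lam_ne.
have [lam0 [star0 notLam0]] : exists lam0,
    LambdaXstar alpha (hpolyhedron a b) lam0 /\ ~ Lam lam0.
  apply: contrapT => none; apply: Lam_ne => l star_l.
  by apply: contrapT => notl; apply: none; exists l.
have LamL : Lam `<=` LambdaX alpha (hpolyhedron a b) by move=> l /Lam_star [].
have [K [g [gLam Lamg]]] := finite_subfamily (circuit_code alpha hXne) LamL.
have [|y [yg ylam0]] :=
  separate_from_finite_family Xx0 (fun k => LamL _ (gLam k)) star0.
  by move=> k gk; apply: notLam0; rewrite -gk.
exists y; split; last by exists lam0.
by move=> l /Lamg [k <-].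
Qed.
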